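(* Let $A,B\subseteq\omega$ with $B$ infinite. If $A$ is c.e. relative to every infinite subset of $B$, then there is an infinite $C\subseteq B$ and a single relative c.e. operator $\Theta$ with $\Theta(S)=A$ for every infinite $S\subseteq C$.
   Context: A relative c.e. operator is a c.e. set $\Theta$ of pairs $(\sigma,x)\in 2^{<\omega}\times\omega$, with $\Theta(X)$ the set of $x$ such that $(\sigma,x)\in\Theta$ for some initial segment $\sigma$ of the characteristic function of $X$. *)

From mathcomp Require Import ssreflect ssrfun ssrbool eqtype ssrnat seq.
Set Implicit Arguments. Unset Strict Implicit. Unset Printing Implicit Defensive.

Definition nset := nat -> Prop.

Definition subset (S T : nset) : Prop := forall x, S x -> T x.

Definition infinite (S : nset) : Prop := forall n, exists m, n <= m /\ S m.

Inductive prog : Type :=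
| PZero : prog
| PSucc : prog
| PProj : nat -> prog
| POracle : prog
| PComp : prog -> list prog -> prog
| PPrec : prog -> prog -> prog
| PMu : prog -> prog.

Inductive eval (X : nset) : prog -> seq nat -> nat -> Prop :=
| eZero v : eval X PZero v 0
| eSucc v : eval X PSucc v (head 0 v).+1
| eProj i v : eval X (PProj i) v (nth 0 v i)
| eOracleIn x v : X x -> eval X POracle (x :: v) 1
| eOracleOut x v : ~ X x -> eval X POracle (x :: v) 0
| eComp f gs v ws y : evals X gs v ws -> eval X f ws y -> eval X (PComp f gs) v y
| ePrec0 f g v y : eval X f v y -> eval X (PPrec f g) (0 :: v) y
| ePrecS f g n v z y :
    eval X (PPrec f g) (n :: v) z -> eval X g (n :: z :: v) y ->
    eval X (PPrec f g) (n.+1 :: v) y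
| eMu f v n :
    eval X f (n :: v) 0 ->
    (forall m, m < n -> exists k, eval X f (m :: v) k.+1) ->
    eval X (PMu f) v n
with evals (X : nset) : list prog -> seq nat -> seq nat -> Prop :=
| esNil v : evals X nil v [::]
| esCons g gs v w ws : eval X g v w -> evals X gs v ws -> evals X (g :: gs) v (w :: ws).

Definition ce_in (X A : nset) : Prop :=
  exists e : prog, forall x, A x <-> exists y, eval X e [:: x] y.

Definition empty_set : nset := fun _ => False.
Definition ce (A : nset) : Prop := ce_in empty_set A.

Definition cpair (a b : nat) : nat := Nat.div ((a + b) * (a + b).+1) 2 + b.
Fixpoint code_str (s : seq bool) : nat :=
  match s with
  | [::] => 0
  | b :: s' => (code_str s').*2 + 1 + b
  end.

Definition operator := seq bool * nat -> Prop.

Definition rel_ce_operator (Theta : operator) : Prop :=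
  ce (fun n => exists s x, n = cpair (code_str s) x /\ Theta (s, x)).

Definition init_seg (s : seq bool) (X : nset) : Prop :=
  forall i, i < size s -> (nth false s i = true <-> X i).

Definition apply_op (Theta : operator) (X : nset) : nset :=
  fun x => exists s, init_seg s X /\ Theta (s, x).

(** Suppose that no pair (C, Θ) as required exists. Use Mathias conditions
    (F, X): a finite stem F and an infinite reservoir X, both inside B. Given a
    condition and a program e, fusion and the Galvin-Prikry theorem for the open
    sets {Z | e^(F ∪ P ∪ Z)(x)↓} give an infinite C = {c_0 < c_1 < ...} ⊆ X such
    that each tail {c_j | j ≥ k} is homogeneous for all these sets with x < k and
    P ⊆ {c_j | j < k}. If some x ∈ A is enumerated from no infinite subset of such
    a tail, or some x ∉ A is enumerated from F ∪ S for an S ⊆ C, finitely much of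
    this extends (F, X) to a condition forcing e^S ≠ A. Otherwise e enumerates A
    from F ∪ S for every infinite S ⊆ C, and by the use principle the operator
    Θ(σ, x) :⟺ e^(F ∪ σ)(x)↓ works on C, which was excluded. Hence a sequence of
    conditions defeating every program in turn builds an infinite G ⊆ B relative
    to which A is not c.e. *)

From Stdlib Require Import Classical ClassicalEpsilon PeanoNat Lia.
From Stdlib Require List.
From HB Require Import structures.
From mathcomp Require Import ssreflect ssrfun ssrbool eqtype ssrnat seq div.
From mathcomp Require Import choice bigop binomial zify.

Set Implicit Arguments.
Unset Strict Implicit.
Unset Printing Implicit Defensive.

Definition decide (P : Prop) : bool :=
  if excluded_middle_informative P then true else false.

Lemma decideP (P : Prop) : reflect P (decide P).
Proof. by rewrite /decide; case: excluded_middle_informative => H; constructor. Qed.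

Lemma ex_min (P : nat -> Prop) : (exists n, P n) ->
  exists n, P n /\ forall m, P m -> n <= m.
Proof.
move=> [n Pn]; have HP : exists n, decide (P n) by exists n; apply/decideP.
case: (ex_minnP HP) => m /decideP Pm m_min.
by exists m; split=> // k Pk; apply/m_min/decideP.
Qed.

Lemma dependent_choice (T : Type) (I : T -> Prop) (P : nat -> T -> T -> Prop)
    (x0 : T) :
  I x0 -> (forall k x, I x -> exists y, I y /\ P k x y) ->
  exists f : nat -> T, f 0 = x0 /\ forall k, I (f k) /\ P k (f k) (f k.+1).
Proof.
move=> I0 step.
pose next k x := epsilon (inhabits x) (fun y => I x -> I y /\ P k x y).
have nextP k x : I x -> I (next k x) /\ P k x (next k x).
  move=> Ix; have [y Hy] := step k x Ix.
  apply: (epsilon_spec (inhabits x) (fun y => I x -> I y /\ P k x y)) Ix.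
  by exists y.
pose fix f k := if k is k'.+1 then next k' (f k') else x0.
have If k : I (f k) by elim: k => //= k /(nextP k) [].
by exists f; split=> // k; split; last exact: (nextP k _ (If k)).2.
Qed.

Lemma exists_common_bound (T : eqType) (L : seq T) (P : T -> nat -> Prop) :
  (forall q b b', b <= b' -> P q b -> P q b') ->
  (forall q, q \in L -> exists b, P q b) -> exists b, forall q, q \in L -> P q b.
Proof.
move=> P_up; elim: L => [|q L IH] HL; first by exists 0.
have [b1 Pb1] := HL q (mem_head _ _).
have [b2 Pb2] := IH (fun r Hr => HL r (mem_behead (s := q :: L) Hr)).
exists (maxn b1 b2) => r; rewrite in_cons => /predU1P [->|Hr].
  exact: P_up (leq_maxl _ _) Pb1.
exact: P_up (leq_maxr _ _) (Pb2 r Hr).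
Qed.

(** * Infinite sets and fusion *)

Definition above_set (b : nat) (X : nset) : nset := fun i => X i /\ b <= i.

Definition all_in (s : seq nat) (X : nset) : Prop := forall i, i \in s -> X i.

Definition above (s : seq nat) (i : nat) : Prop := forall j, j \in s -> j < i.

Definition beyond (s : seq nat) (X : nset) : nset := fun i => X i /\ above s i.

Definition seq_union (s : seq nat) (X : nset) : nset := fun i => i \in s \/ X i.

Definition agree_below (n : nat) (X Y : nset) : Prop :=
  forall i, i < n -> (X i <-> Y i).

Lemma agree_below_le n m X Y : agree_below n X Y -> m <= n -> agree_below m X Y.
Proof. by move=> H le_mn i lt_im; apply/H/(leq_trans lt_im). Qed.

Lemma subset_trans (X Y Z : nset) : subset X Y -> subset Y Z -> subset X Z.
Proof. by move=> XY YZ i /XY /YZ. Qed.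

Lemma infinite_above_set b X : infinite X -> infinite (above_set b X).
Proof.
move=> HX n; have [m [le_nm Xm]] := HX (maxn n b).
by exists m; move: le_nm; rewrite geq_max => /andP [-> le_bm].
Qed.

Lemma infinite_cofinite (S Z : nset) (L : seq nat) : infinite S ->
  (forall i, S i -> i \in L \/ Z i) -> infinite (fun i => S i /\ Z i).
Proof.
move=> HS SLZ n; have [m [le_m Sm]] := HS (maxn n (\max_(i <- L) i).+1).
move: le_m; rewrite geq_max => /andP [le_nm gt_m].
exists m; split=> //; split=> //; case: (SLZ m Sm) => // Lm.
by move: gt_m; rewrite ltnNge leq_bigmax_seq.
Qed.

Definition hereditary (Q : nset -> Prop) : Prop :=
  forall Y Y', subset Y' Y -> Q Y -> Q Y'.

Definition dense (Q : nset -> Prop) : Prop :=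
  forall Y, infinite Y -> exists Y', subset Y' Y /\ infinite Y' /\ Q Y'.

Definition forall_infsub (Y : nset) (Q : nset -> Prop) : Prop :=
  forall Z, subset Z Y -> infinite Z -> Q Z.

Definition homogeneous (Q : nset -> Prop) (Y : nset) : Prop :=
  forall_infsub Y Q \/ forall_infsub Y (fun Z => ~ Q Z).

Lemma forall_infsub_hereditary Q : hereditary (forall_infsub^~ Q).
Proof. by move=> Y Y' Y'Y HY Z ZY'; apply: HY; apply: subset_trans ZY' Y'Y. Qed.

Lemma homogeneous_hereditary Q : hereditary (homogeneous Q).
Proof. by move=> Y Y' Y'Y [H|H]; [left|right]; apply: forall_infsub_hereditary H. Qed.

Lemma decided_hereditary Q : hereditary Q ->
  hereditary (fun Y => Q Y \/ forall_infsub Y (fun Z => ~ Q Z)).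
Proof.
move=> Qher Y Y' Y'Y [QY|noQ]; first by left; apply: Qher QY.
by right; apply: forall_infsub_hereditary noQ.
Qed.

Lemma dense_decided Q :
  dense (fun Y => Q Y \/ forall_infsub Y (fun Z => ~ Q Z)).
Proof.
move=> Y HY.
have [[Z [ZY [Zinf QZ]]]|noQ] := classic (exists Z, subset Z Y /\ infinite Z /\ Q Z).
  by exists Z; split=> //; split=> //; left.
exists Y; split=> //; split=> //.
by right=> Z ZY Zinf QZ; apply: noQ; exists Z.
Qed.

Lemma dense_all (T : eqType) (L : seq T) (Q : T -> nset -> Prop) :
  (forall q, hereditary (Q q)) -> (forall q, dense (Q q)) ->
  dense (fun Y => forall q, q \in L -> Q q Y).
Proof.
move=> Qher Qdense; elim: L => [|q L IH] Y HY; first by exists Y; split=> //; split.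
have [Y1 [Y1Y [Y1inf QY1]]] := IH Y HY.
have [Y2 [Y2Y1 [Y2inf QY2]]] := Qdense q Y1 Y1inf.
exists Y2; split; first exact: subset_trans Y2Y1 Y1Y.
split=> // r; rewrite in_cons => /predU1P [->|Lr] //.
exact: Qher _ _ _ Y2Y1 (QY1 r Lr).
Qed.

Definition increasing (c : nat -> nat) : Prop := forall j, c j < c j.+1.

Definition tail_set (c : nat -> nat) (k : nat) : nset :=
  fun i => exists2 j, k <= j & i = c j.

Section Increasing.

Context {c : nat -> nat} (c_incr : increasing c).

Lemma increasing_leq : {mono c : i j / i <= j}.
Proof. exact: leq_mono (homo_ltn ltn_trans c_incr). Qed.

Lemma increasing_ltn : {mono c : i j / i < j}.
Proof. exact: leqW_mono increasing_leq. Qed.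

Lemma increasing_ge j : j <= c j.
Proof. by elim: j => // j IH; apply: leq_ltn_trans IH (c_incr j). Qed.

Lemma infinite_tail_set k : infinite (tail_set c k).
Proof.
move=> n; exists (c (maxn n k)); split; last by exists (maxn n k); rewrite ?leq_maxr.
exact: leq_trans (leq_maxl n k) (increasing_ge _).
Qed.

Lemma mem_mkseq_incr i k : (i \in mkseq c k) <-> exists2 j, j < k & i = c j.
Proof.
split; first by move=> /mapP [j]; rewrite mem_iota add0n => /andP [_ lt_jk] ->; exists j.
by move=> [j lt_jk ->]; apply/mapP; exists j; rewrite ?mem_iota.
Qed.

Lemma tail_set_split k i : tail_set c 0 i -> i \in mkseq c k \/ tail_set c k i.
Proof.
move=> [j _ ->]; case: (ltnP j k) => [lt_jk|le_kj]; last by right; exists j.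
by left; apply/mem_mkseq_incr; exists j.
Qed.

Lemma tail_set_prefix s : all_in s (tail_set c 0) ->
  exists k, {subset s <= mkseq c k} /\ forall j, above s (c j) -> k <= j.
Proof.
elim: s => [|a s IH] Hs; first by exists 0.
have [k [s_k above_k]] := IH (fun i Hi => Hs i (mem_behead (s := a :: s) Hi)).
have [ja _ Ea] := Hs a (mem_head _ _); exists (maxn k ja.+1); split.
  move=> i; rewrite in_cons => /predU1P [->|/s_k /mem_mkseq_incr [j lt_jk ->]].
    by apply/mem_mkseq_incr; exists ja; rewrite ?leq_maxr.
  by apply/mem_mkseq_incr; exists j; rewrite // leq_max lt_jk.
move=> j Hj; rewrite geq_max -increasing_ltn -Ea Hj ?mem_head // andbT.
by apply: above_k => i Hi; apply: Hj; rewrite in_cons Hi orbT.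
Qed.

End Increasing.

Section Fusion.

Variable R : seq nat -> nset -> Prop.
Hypothesis R_hereditary : forall p, hereditary (R p).
Hypothesis R_dense : forall p, dense (R p).

Lemma fusion X : infinite X -> exists c, increasing c /\ (forall j, X (c j)) /\
  forall k, R (mkseq c k) (tail_set c k).
Proof.
move=> HX; have [Y0 [Y0X [Y0inf RY0]]] := R_dense [::] HX.
pose I (q : seq nat * nset) := infinite q.2 /\ subset q.2 X /\ R q.1 q.2.
pose step (q q' : seq nat * nset) := exists2 z, q.2 z &
  q'.1 = rcons q.1 z /\ subset q'.2 (above_set z.+1 q.2).
have step_ex : forall (k : nat) q, I q -> exists q', I q' /\ step q q'.
  move=> _ [p Y] [/= Yinf [YX RY]]; have [z [_ Yz]] := Yinf 0.
  have [Y' [Y'Y [Y'inf RY']]] := R_dense (rcons p z) (infinite_above_set z.+1 Yinf).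
  exists (rcons p z, Y'); split; last by exists z.
  by do 2!split=> //; apply: subset_trans Y'Y _ => i [/YX].
have I0 : I ([::], Y0) by [].
have [f [f0 Hf]] := dependent_choice I0 step_ex.
pose c k := last 0 (f k.+1).1.
have fS k : (f k.+1).1 = rcons (f k).1 (c k) /\ (f k).2 (c k) /\
    subset (f k.+1).2 (above_set (c k).+1 (f k).2).
  by have [_ [z Hz [E sub]]] := Hf k; rewrite /c E last_rcons.
have f_mkseq k : (f k).1 = mkseq c k.
  by elim: k => [|k IH]; rewrite ?f0 // mkseqS -IH; case: (fS k).
have f_dec k d : subset (f (k + d)).2 (f k).2.
  elim: d => [|d IH]; first by rewrite addn0.
  by rewrite addnS => i /(fS _).2.2 [/IH].
have c_in k : (f k).2 (c k) := (fS k).2.1.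
have c_incr : increasing c by move=> k; case: ((fS k).2.2 _ (c_in k.+1)).
exists c; split=> //; split; first by move=> j; apply: (Hf j).1.2.1.
move=> k; rewrite -f_mkseq; apply: R_hereditary (Hf k).1.2.2.
by move=> _ [j le_kj ->]; rewrite -(subnKC le_kj); apply/f_dec/c_in.
Qed.

End Fusion.

(** * The Galvin-Prikry theorem for open sets *)

Fixpoint subseqs {T : Type} (p : seq T) : seq (seq T) :=
  if p is a :: p' then subseqs p' ++ map (cons a) (subseqs p') else [:: [::]].

Lemma subseqs_sub (T : eqType) (p q : seq T) : q \in subseqs p -> {subset q <= p}.
Proof.
elim: p q => [|a p IH] q /=; first by rewrite inE => /eqP -> i.
rewrite mem_cat => /orP [/IH qp i /qp ip|/mapP [q' /IH q'p ->] i].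
  by rewrite in_cons ip orbT.
by rewrite !in_cons => /predU1P [->|/q'p ->]; rewrite ?eqxx ?orbT.
Qed.

Lemma subseqs_complete (T : eqType) (p s : seq T) :
  {subset s <= p} -> exists2 q, q \in subseqs p & s =i q.
Proof.
elim: p s => [|a p IH] s sp /=.
  by exists [::]; rewrite ?inE // => i; apply/idP => /sp.
have [|q qp Eq] := IH [seq i <- s | i != a].
  by move=> i; rewrite mem_filter => /andP [ia /sp]; rewrite in_cons (negbTE ia).
have Es i : i \in s = (i == a) && (a \in s) || (i \in q).
  by rewrite -Eq mem_filter; case: eqVneq => [->|] /=; rewrite ?orbF.
case as_: (a \in s).
  exists (a :: q); first by rewrite mem_cat; apply/orP; right; apply/map_f.
  by move=> i; rewrite Es as_ andbT in_cons.
by exists q; rewrite ?mem_cat ?qp // => i; rewrite Es as_ andbF.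
Qed.

Section OpenRamsey.

Variable O : nset -> Prop.
Hypothesis O_open : forall S, O S -> exists n, forall T, agree_below n S T -> O T.

Lemma O_ext S T : (forall i, S i <-> T i) -> O S -> O T.
Proof. by move=> ST /O_open [n On]; apply: On => i _. Qed.

Definition accepts (s : seq nat) (Y : nset) : Prop :=
  forall_infsub Y (fun Z => O (seq_union s Z)).

Definition rejects (s : seq nat) (Y : nset) : Prop :=
  forall_infsub Y (fun Z => ~ accepts s Z).

Definition decisive (Y : nset) : Prop :=
  forall s, all_in s Y -> accepts s (beyond s Y) \/ rejects s (beyond s Y).

Lemma accepts_hereditary s : hereditary (accepts s).
Proof. exact: forall_infsub_hereditary. Qed.

Lemma rejects_hereditary s : hereditary (rejects s).
Proof. exact: forall_infsub_hereditary. Qed.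

Lemma accepts_eq_mem s s' Y : s =i s' -> accepts s Y -> accepts s' Y.
Proof.
by move=> Es acc Z ZY Zinf; apply: O_ext _ (acc Z ZY Zinf) => i; rewrite /seq_union Es.
Qed.

Lemma rejects_eq_mem s s' Y : s =i s' -> rejects s Y -> rejects s' Y.
Proof.
move=> Es rej Z ZY Zinf acc; apply: (rej Z ZY Zinf).
by apply: accepts_eq_mem acc => i; rewrite Es.
Qed.

Lemma exists_decisive X : infinite X -> exists Y, subset Y X /\ infinite Y /\ decisive Y.
Proof.
move=> HX.
pose R (p : seq nat) Y := forall s : seq nat, {subset s <= p} -> accepts s Y \/ rejects s Y.
have decided_her s := decided_hereditary (@accepts_hereditary s).
have [|p|c [c_incr [cX Rc]]] := @fusion R _ _ X HX.
- by move=> p Y Y' Y'Y RY s sp; apply: decided_her Y'Y (RY s sp).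
- move=> Y HY; have [Y' [Y'Y [Y'inf dec]]] :=
    dense_all (subseqs p) decided_her (fun s => dense_decided _) HY.
  exists Y'; split=> //; split=> // s /subseqs_complete [q /dec [acc|rej] Es].
    by left; apply: accepts_eq_mem acc => i; rewrite Es.
  by right; apply: rejects_eq_mem rej => i; rewrite Es.
exists (tail_set c 0); split; first by move=> _ [j _ ->].
split; first exact: infinite_tail_set.
move=> s /(tail_set_prefix c_incr) [k [s_k above_k]].
have sub : subset (beyond s (tail_set c 0)) (tail_set c k).
  by move=> _ [[j _ ->] /above_k]; exists j.
by case: (Rc k s s_k) => [acc|rej]; [left|right]; apply: forall_infsub_hereditary sub _.
Qed.

Lemma rejects_beyond_eq_mem s s' Y :
  s =i s' -> rejects s (beyond s Y) -> rejects s' (beyond s' Y).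
Proof.
move=> Es /(rejects_eq_mem Es); apply: rejects_hereditary => i [Yi above_i].
by split=> // j; rewrite Es; apply: above_i.
Qed.

Lemma accepts_by_least s Y W : subset W (beyond s Y) ->
  (forall z, W z -> accepts (z :: s) (beyond (z :: s) Y)) -> accepts s W.
Proof.
move=> WY Wacc Z ZW Zinf.
have [z0 [Zz0 z0_min]] : exists z0, Z z0 /\ forall m, Z m -> z0 <= m.
  by apply: ex_min; have [m [_ Zm]] := Zinf 0; exists m.
have Z'sub : subset (above_set z0.+1 Z) (beyond (z0 :: s) Y).
  move=> i [Zi lt_z0i]; have [Yi above_i] := WY i (ZW i Zi).
  by split=> // j; rewrite in_cons => /predU1P [->|/above_i].
(* [s ∪ Z] is [(z0 :: s) ∪ (Z above z0)] for the least element [z0] of [Z]. *)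
apply: O_ext _ (Wacc z0 (ZW z0 Zz0) _ Z'sub (infinite_above_set _ Zinf)) => i.
rewrite /seq_union /above_set in_cons; split.
  by case=> [/predU1P [->|si]|[Zi _]]; [right|left|right].
case=> [si|Zi]; first by left; rewrite si orbT.
have := z0_min i Zi; rewrite leq_eqVlt => /predU1P [->|lt_z0i].
  by left; rewrite eqxx.
by right.
Qed.

Lemma rejects_cons_eventually Y s : decisive Y -> all_in s Y ->
  rejects s (beyond s Y) -> exists b, forall z, Y z -> b <= z -> above s z ->
  rejects (z :: s) (beyond (z :: s) Y).
Proof.
(* Otherwise the [z] with [accepts (z :: s)] would form a set accepting [s]. *)
move=> Ydec sY rej; apply: NNPP => noBound.
pose W z := beyond s Y z /\ accepts (z :: s) (beyond (z :: s) Y).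
have Winf : infinite W.
  move=> b; apply: NNPP => noW; apply: noBound; exists b => z Yz le_bz above_z.
  have zsY : all_in (z :: s) Y by move=> i; rewrite in_cons => /predU1P [->|/sY].
  by case: (Ydec _ zsY) => // acc; case: noW; exists z.
apply: (rej W (fun z => @proj1 _ _) Winf).
exact: (accepts_by_least (fun z => @proj1 _ _) (fun z => @proj2 _ _)).
Qed.

Lemma rejecting_step Y p k : infinite Y -> decisive Y -> all_in p Y ->
  (forall s : seq nat, {subset s <= p} -> rejects s (beyond s Y)) ->
  exists z, Y z /\ k <= z /\
    forall s : seq nat, {subset s <= z :: p} -> rejects s (beyond s Y).
Proof.
move=> Yinf Ydec pY rej_p.
have [b Hb] : exists b, forall q, q \in subseqs p -> forall z, Y z -> b <= z ->
    above q z -> rejects (z :: q) (beyond (z :: q) Y).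
  apply: exists_common_bound => [q b b' le_bb' H z Yz le_b'z|q /subseqs_sub qp].
    exact: H Yz (leq_trans le_bb' le_b'z).
  by apply: rejects_cons_eventually (rej_p q qp) => // i /qp /pY.
have [z [le_z Yz]] := Yinf (maxn (maxn b k) (\max_(i <- p) i).+1).
move: le_z; rewrite !geq_max => /andP [/andP [le_bz le_kz] gt_p].
have above_p : above p z.
  by move=> i ip; apply: leq_ltn_trans gt_p; apply: leq_bigmax_seq i ip isT.
exists z; split=> //; split=> // s s_zp.
case zs: (z \in s); last first.
  apply: rej_p => i si; move: (s_zp i si); rewrite in_cons => /predU1P [Ei|//].
  by rewrite -Ei si in zs.
have [|q qp Eq] := @subseqs_complete _ p [seq i <- s | i != z].
  by move=> i; rewrite mem_filter => /andP [iz /s_zp]; rewrite in_cons (negbTE iz).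
have Es : z :: q =i s.
  by move=> i; rewrite in_cons -Eq mem_filter; case: eqVneq => [->|].
apply: rejects_beyond_eq_mem Es (Hb q qp z Yz le_bz _).
by move=> i /(subseqs_sub qp) /above_p.
Qed.

Lemma chain_cover (f : nat -> seq nat) s : (forall k, {subset f k <= f k.+1}) ->
  all_in s (fun i => exists k, i \in f k) -> exists k, {subset s <= f k}.
Proof.
move=> f_incr; have f_mono k d : {subset f k <= f (k + d)}.
  by elim: d => [|d IH] i; rewrite ?addn0 // addnS => /IH /f_incr.
elim: s => [|a s IH] sf; first by exists 0.
have [ka a_ka] := sf a (mem_head _ _).
have [ks s_ks] := IH (fun i si => sf i (mem_behead (s := a :: s) si)).
exists (ka + ks) => i; rewrite in_cons => /predU1P [->|/s_ks]; first exact: f_mono.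
by rewrite addnC; apply: f_mono.
Qed.

Lemma exists_rejecting Y : infinite Y -> decisive Y -> rejects [::] (beyond [::] Y) ->
  exists Y', subset Y' Y /\ infinite Y' /\ forall s, all_in s Y' -> rejects s (beyond s Y).
Proof.
move=> Yinf Ydec rej0.
pose I p := all_in p Y /\ forall s : seq nat, {subset s <= p} -> rejects s (beyond s Y).
pose step k (p p' : seq nat) := exists2 z, k <= z & p' = z :: p.
have I0 : I [::].
  split=> // s s0; apply: rejects_beyond_eq_mem rej0 => i.
  by rewrite in_nil; apply/esym/negbTE/negP => /s0.
have step_ex k p : I p -> exists p', I p' /\ step k p p'.
  move=> [pY rej_p]; have [z [Yz [le_kz rej_zp]]] := rejecting_step k Yinf Ydec pY rej_p.
  exists (z :: p); split; last by exists z.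
  by split=> // i; rewrite in_cons => /predU1P [->|/pY].
have [f [f0 Hf]] := dependent_choice I0 step_ex.
exists (fun i => exists k, i \in f k); split; first by move=> i [k /(Hf k).1.1].
split.
  move=> n; have [_ [z le_nz fS]] := Hf n.
  by exists z; split=> //; exists n.+1; rewrite fS mem_head.
move=> s /chain_cover [|k s_k]; last exact: (Hf k).1.2 s s_k.
by move=> k i; have [_ [z _ ->]] := Hf k; rewrite in_cons => ->; rewrite orbT.
Qed.

Theorem open_ramsey X : infinite X -> exists Y, subset Y X /\ infinite Y /\ homogeneous O Y.
Proof.
move=> HX; have [Y [YX [Yinf Ydec]]] := exists_decisive HX.
have [acc|rej] : accepts [::] (beyond [::] Y) \/ rejects [::] (beyond [::] Y) by apply: Ydec.
  exists Y; split=> //; split=> //; left=> Z ZY Zinf.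
  have ZY0 : subset Z (beyond [::] Y) by move=> i /ZY.
  apply: O_ext _ (acc Z ZY0 Zinf) => i.
  by rewrite /seq_union in_nil; split=> [[]|Zi] //; right.
have [Y' [Y'Y [Y'inf rej_Y']]] := exists_rejecting Yinf Ydec rej.
exists Y'; split; first exact: subset_trans Y'Y YX.
split=> //; right=> Z ZY' Zinf /O_open [n On].
pose s := [seq i <- iota 0 n | decide (Z i)].
have sY' : all_in s Y' by move=> i; rewrite mem_filter => /andP [/decideP /ZY'].
apply: (rej_Y' s sY' (above_set n Z)).
- move=> i [Zi le_ni]; split; first exact/Y'Y/ZY'.
  by move=> j; rewrite mem_filter mem_iota => /and3P [_ _ lt_jn]; apply: leq_trans le_ni.
- exact: infinite_above_set.
move=> Z' Z'Z _; apply: On => i lt_in.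
rewrite /seq_union mem_filter mem_iota leq0n add0n lt_in !andbT.
split=> [Zi|[/decideP //|/Z'Z [_]]]; first by left; apply/decideP.
by rewrite leqNgt lt_in.
Qed.

End OpenRamsey.

(** * Oracle computations *)

Section EvalInversion.

Variable X : nset.

Lemma eval_zero_inv v y : eval X PZero v y -> y = 0.
Proof. by move=> H; inversion H. Qed.

Lemma eval_succ_inv v y : eval X PSucc v y -> y = (head 0 v).+1.
Proof. by move=> H; inversion H. Qed.

Lemma eval_proj_inv i v y : eval X (PProj i) v y -> y = nth 0 v i.
Proof. by move=> H; inversion H. Qed.

Lemma eval_oracle_nil y : ~ eval X POracle [::] y.
Proof. by move=> H; inversion H. Qed.

Lemma eval_oracle_inv x v y : eval X POracle (x :: v) y ->
  X x /\ y = 1 \/ ~ X x /\ y = 0.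
Proof. by move=> H; inversion H; [left|right]. Qed.

Lemma eval_comp_inv f gs v y : eval X (PComp f gs) v y ->
  exists ws, evals X gs v ws /\ eval X f ws y.
Proof. by move=> H; inversion H; exists ws. Qed.

Lemma eval_prec_nil f g y : ~ eval X (PPrec f g) [::] y.
Proof. by move=> H; inversion H. Qed.

Lemma eval_prec0_inv f g v y : eval X (PPrec f g) (0 :: v) y -> eval X f v y.
Proof. by move=> H; inversion H. Qed.

Lemma eval_precS_inv f g n v y : eval X (PPrec f g) (n.+1 :: v) y ->
  exists z, eval X (PPrec f g) (n :: v) z /\ eval X g (n :: z :: v) y.
Proof. by move=> H; inversion H; exists z. Qed.

Lemma eval_mu_inv f v n : eval X (PMu f) v n ->
  eval X f (n :: v) 0 /\ forall m, m < n -> exists k, eval X f (m :: v) k.+1.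
Proof. by move=> H; inversion H. Qed.

Lemma evals_nil_inv v ws : evals X [::] v ws -> ws = [::].
Proof. by move=> H; inversion H. Qed.

Lemma evals_cons_inv g gs v ws : evals X (g :: gs) v ws ->
  exists w ws', ws = w :: ws' /\ eval X g v w /\ evals X gs v ws'.
Proof. by move=> H; inversion H; exists w, ws0. Qed.

End EvalInversion.

Definition prog_nested_ind (P : prog -> Prop) (P0 : P PZero) (PS : P PSucc)
    (PP : forall i, P (PProj i)) (PO : P POracle)
    (PC : forall f gs, P f -> (forall g, List.In g gs -> P g) -> P (PComp f gs))
    (PR : forall f g, P f -> P g -> P (PPrec f g)) (PM : forall f, P f -> P (PMu f)) :
    forall p, P p :=
  fix F p := match p with
  | PZero => P0 | PSucc => PS | PProj i => PP i | POracle => PO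
  | PComp f gs => PC f gs (F f)
      ((fix G (gs : list prog) : forall g, List.In g gs -> P g :=
         match gs with
         | [::] => fun g gin => False_ind _ gin
         | g' :: gs' => fun g gin => match gin with
                                     | or_introl E => eq_ind g' P (F g') g E
                                     | or_intror gin' => G gs' g gin'
                                     end
         end) gs)
  | PPrec f g => PR f g (F f) (F g)
  | PMu f => PM f (F f)
  end.

Lemma eval_det X p v y1 y2 : eval X p v y1 -> eval X p v y2 -> y1 = y2.
Proof.
elim/prog_nested_ind: p v y1 y2.
- by move=> v y1 y2 /eval_zero_inv -> /eval_zero_inv ->.
- by move=> v y1 y2 /eval_succ_inv -> /eval_succ_inv ->.
- by move=> i v y1 y2 /eval_proj_inv -> /eval_proj_inv ->.
- move=> [|x v] y1 y2; first by move=> /eval_oracle_nil.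
  by move=> /eval_oracle_inv [] [Xx ->] /eval_oracle_inv [] [].
- move=> f gs IHf IHgs v y1 y2 /eval_comp_inv [ws1 [Hs1 Hf1]] /eval_comp_inv [ws2 [Hs2 Hf2]].
  suff E : ws1 = ws2 by apply: IHf Hf1 _; rewrite E.
  elim: gs ws1 ws2 IHgs Hs1 Hs2 {Hf1 Hf2} => [|g gs IH] ws1 ws2 IHgs.
    by move=> /evals_nil_inv -> /evals_nil_inv ->.
  move=> /evals_cons_inv [w1 [ws1' [-> [Hg1 Hs1]]]].
  move=> /evals_cons_inv [w2 [ws2' [-> [Hg2 Hs2]]]].
  rewrite (IHgs g (or_introl erefl) _ _ _ Hg1 Hg2).
  by rewrite (IH _ _ (fun g' g'gs => IHgs g' (or_intror g'gs)) Hs1 Hs2).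
- move=> f g IHf IHg [|n v] y1 y2; first by move=> /eval_prec_nil.
  elim: n v y1 y2 => [|n IHn] v y1 y2.
    by move=> /eval_prec0_inv H1 /eval_prec0_inv /(IHf _ _ _ H1).
  move=> /eval_precS_inv [z1 [Hp1 Hg1]] /eval_precS_inv [z2 [Hp2 Hg2]].
  by move: Hg1; rewrite (IHn _ _ _ Hp1 Hp2) => /IHg; apply.
- move=> f IHf v n1 n2 /eval_mu_inv [H1 lt1] /eval_mu_inv [H2 lt2].
  case: (ltngtP n1 n2) => // [/lt2|/lt1] [k Hk].
    by have := IHf _ _ _ H1 Hk.
  by have := IHf _ _ _ Hk H2.
Qed.

Definition finite_use (X : nset) (P : nset -> Prop) : Prop :=
  exists u, forall Y, agree_below u X Y -> P Y.

Lemma finite_use_and X (P Q : nset -> Prop) :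
  finite_use X P -> finite_use X Q -> finite_use X (fun Y => P Y /\ Q Y).
Proof.
move=> [u1 HP] [u2 HQ]; exists (maxn u1 u2) => Y XY.
by split; [apply/HP/(agree_below_le XY)/leq_maxl|apply/HQ/(agree_below_le XY)/leq_maxr].
Qed.

Lemma finite_use_impl X (P Q : nset -> Prop) :
  (forall Y, P Y -> Q Y) -> finite_use X P -> finite_use X Q.
Proof. by move=> PQ [u HP]; exists u => Y /HP /PQ. Qed.

Lemma finite_use_all X n (P : nat -> nset -> Prop) :
  (forall m, m < n -> finite_use X (P m)) -> finite_use X (fun Y => forall m, m < n -> P m Y).
Proof.
elim: n => [|n IH] HP; first by exists 0.
apply: finite_use_impl (finite_use_and (IH (fun m lt_mn => HP m (ltnW lt_mn))) (HP n _)) => //.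
by move=> Y [HY Pn] m; rewrite ltnS leq_eqVlt => /predU1P [->|/HY].
Qed.

Lemma eval_use X p v y : eval X p v y -> finite_use X (fun Y => eval Y p v y).
Proof.
elim/prog_nested_ind: p v y.
- by move=> v y /eval_zero_inv ->; exists 0 => Y _; apply: eZero.
- by move=> v y /eval_succ_inv ->; exists 0 => Y _; apply: eSucc.
- by move=> i v y /eval_proj_inv ->; exists 0 => Y _; apply: eProj.
- move=> [|x v] y; first by move=> /eval_oracle_nil.
  move=> /eval_oracle_inv [] [Xx ->]; exists x.+1 => Y /(_ x (ltnSn x)) XY.
    by apply/eOracleIn/XY.
  by apply/eOracleOut => /XY.
- move=> f gs IHf IHgs v y /eval_comp_inv [ws [Hs Hf]].
  have uses : finite_use X (fun Y => evals Y gs v ws).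
    elim: gs ws IHgs Hs {Hf} => [|g gs IH] ws IHgs.
      by move=> /evals_nil_inv ->; exists 0 => Y _; apply: esNil.
    move=> /evals_cons_inv [w [ws' [-> [Hg Hs]]]].
    apply: finite_use_impl (finite_use_and (IHgs g (or_introl erefl) _ _ Hg)
      (IH _ (fun g' g'gs => IHgs g' (or_intror g'gs)) Hs)).
    by move=> Y [] /esCons; apply.
  by apply: finite_use_impl (finite_use_and uses (IHf _ _ Hf)) => Y [] /eComp; apply.
- move=> f g IHf IHg [|n v] y; first by move=> /eval_prec_nil.
  elim: n v y => [|n IHn] v y.
    by move=> /eval_prec0_inv /IHf; apply: finite_use_impl => Y /ePrec0.
  move=> /eval_precS_inv [z [Hp Hg]].
  by apply: finite_use_impl (finite_use_and (IHn _ _ Hp) (IHg _ _ Hg)) => Y [] /ePrecS; apply.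
- move=> f IHf v n /eval_mu_inv [H0 Hlt].
  have uses_lt : finite_use X (fun Y => forall m, m < n -> exists k, eval Y f (m :: v) k.+1).
    apply: finite_use_all => m /Hlt [k /IHf].
    by apply: finite_use_impl => Y Hk; exists k.
  by apply: finite_use_impl (finite_use_and (IHf _ _ H0) uses_lt) => Y [] /eMu.
Qed.

(** * Primitive recursive programs and codings *)

Section Arithmetic.

Variable X : nset.

Lemma eval_eq p v y y' : eval X p v y -> y = y' -> eval X p v y'.
Proof. by move=> H <-. Qed.

Lemma eval_comp1 f g v w y :
  eval X g v w -> eval X f [:: w] y -> eval X (PComp f [:: g]) v y.
Proof. by move=> Hg; apply: eComp; apply: esCons Hg (esNil _ _). Qed.

Lemma eval_comp2 f g1 g2 v w1 w2 y : eval X g1 v w1 -> eval X g2 v w2 ->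
  eval X f [:: w1; w2] y -> eval X (PComp f [:: g1; g2]) v y.
Proof. by move=> H1 H2; apply: eComp; apply: esCons H1 (esCons H2 (esNil _ _)). Qed.

Lemma eval_comp2_inv f g1 g2 v y : eval X (PComp f [:: g1; g2]) v y ->
  exists w1 w2, [/\ eval X g1 v w1, eval X g2 v w2 & eval X f [:: w1; w2] y].
Proof.
move=> /eval_comp_inv [ws [/evals_cons_inv [w1 [ws' [-> [H1 Hs]]]] Hf]].
move: Hs Hf => /evals_cons_inv [w2 [ws'' [-> [H2 /evals_nil_inv ->]]]] Hf.
by exists w1, w2.
Qed.

Definition POne : prog := PComp PSucc [:: PZero].

Lemma eval_one v : eval X POne v 1.
Proof. exact: eval_comp1 (eZero _ _) (eSucc _ _). Qed.

Fixpoint PConst (n : nat) : prog :=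
  if n is n'.+1 then PComp PSucc [:: PConst n'] else PZero.

Lemma eval_const n v : eval X (PConst n) v n.
Proof. by elim: n => [|n IH] /=; [apply: eZero|apply: eval_comp1 IH (eSucc _ _)]. Qed.

Definition PPred : prog := PPrec PZero (PProj 0).

Lemma eval_pred x v : eval X PPred (x :: v) x.-1.
Proof. by elim: x => [|x IH]; [apply/ePrec0/eZero|apply: ePrecS IH (eProj _ _ _)]. Qed.

Definition PAdd : prog := PPrec (PProj 0) (PComp PSucc [:: PProj 1]).

Lemma eval_add x y v : eval X PAdd (x :: y :: v) (x + y).
Proof.
elim: x => [|x IH]; first exact/ePrec0/eProj.
exact: ePrecS IH (eval_comp1 (eProj _ _ _) (eSucc _ _)).
Qed.

Definition PSubRev : prog := PPrec (PProj 0) (PComp PPred [:: PProj 1]).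

Lemma eval_subrev y x v : eval X PSubRev (y :: x :: v) (x - y).
Proof.
elim: y => [|y IH]; first by rewrite subn0; apply/ePrec0/eProj.
by apply: ePrecS IH (eval_comp1 (eProj _ _ _) _); rewrite subnS; apply: eval_pred.
Qed.

Definition PSub : prog := PComp PSubRev [:: PProj 1; PProj 0].

Lemma eval_sub x y v : eval X PSub (x :: y :: v) (x - y).
Proof. exact: eval_comp2 (eProj _ _ _) (eProj _ _ _) (eval_subrev _ _ _). Qed.

Definition PMul : prog := PPrec PZero (PComp PAdd [:: PProj 1; PProj 2]).

Lemma eval_mul x y v : eval X PMul (x :: y :: v) (x * y).
Proof.
elim: x => [|x IH]; first exact/ePrec0/eZero.
apply: ePrecS IH (eval_comp2 (eProj _ _ _) (eProj _ _ _) _).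
by apply: eval_eq (eval_add _ _ _) _; rewrite mulSn addnC.
Qed.

Definition PNot : prog := PComp PSub [:: POne; PProj 0].

Lemma eval_not x v : eval X PNot (x :: v) (1 - x).
Proof. exact: eval_comp2 (eval_one _) (eProj _ _ _) (eval_sub _ _ _). Qed.

Definition POdd : prog := PPrec PZero (PComp PNot [:: PProj 1]).

Lemma eval_odd x v : eval X POdd (x :: v) (odd x).
Proof.
elim: x => [|x IH]; first exact/ePrec0/eZero.
apply: ePrecS IH (eval_comp1 (eProj _ _ _) _).
by apply: eval_eq (eval_not _ _) _; rewrite /=; case: (odd x).
Qed.

Definition PHalf : prog :=
  PPrec PZero (PComp PAdd [:: PProj 1; PComp POdd [:: PProj 0]]).

Lemma eval_half x v : eval X PHalf (x :: v) x./2.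
Proof.
elim: x => [|x IH]; first exact/ePrec0/eZero.
apply: ePrecS IH (eval_comp2 (eProj _ _ _) (eval_comp1 (eProj _ _ _) (eval_odd _ _)) _).
by apply: eval_eq (eval_add _ _ _) _; rewrite /= uphalf_half addnC.
Qed.

Definition PPos : prog := PComp PNot [:: PNot].

Lemma eval_pos x v : eval X PPos (x :: v) (0 < x).
Proof.
apply: eval_comp1 (eval_not _ _) (eval_eq (eval_not _ _) _).
by case: x.
Qed.

Definition POr : prog := PComp PPos [:: PAdd].

Lemma eval_or (b1 b2 : bool) (v : seq nat) :
  eval X POr ((b1 : nat) :: (b2 : nat) :: v) (b1 || b2).
Proof.
apply: eval_comp1 (eval_add _ _ _) (eval_eq (eval_pos _ _) _).
by case: b1; case: b2.
Qed.

Definition PEq (n : nat) : prog :=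
  PComp PNot [:: PComp PAdd [:: PComp PSub [:: PProj 0; PConst n];
                               PComp PSub [:: PConst n; PProj 0]]].

Lemma eval_eq_const n i v : eval X (PEq n) (i :: v) (i == n).
Proof.
apply: eval_comp1 (eval_comp2 (eval_comp2 (eProj _ _ _) (eval_const _ _) (eval_sub _ _ _))
  (eval_comp2 (eval_const _ _) (eProj _ _ _) (eval_sub _ _ _)) (eval_add _ _ _)) _.
apply: eval_eq (eval_not _ _) _; rewrite /= eqn_leq -!subn_eq0 -addn_eq0.
by case: (_ + _).
Qed.

Fixpoint PMem (F : seq nat) : prog :=
  if F is f :: F' then PComp POr [:: PEq f; PMem F'] else PZero.

Lemma eval_mem F i v : eval X (PMem F) (i :: v) (i \in F).
Proof.
elim: F => [|f F IH] /=; first exact: eZero.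
by rewrite in_cons; apply: eval_comp2 (eval_eq_const _ _ _) IH (eval_or _ _ _).
Qed.

Definition code_tail (c : nat) : nat := c.-1./2.

Definition PCodeTail : prog := PComp PHalf [:: PPred].

Lemma eval_code_tail c v : eval X PCodeTail (c :: v) (code_tail c).
Proof. exact: eval_comp1 (eval_pred _ _) (eval_half _ _). Qed.

Definition PCodeDrop : prog := PPrec (PProj 0) (PComp PCodeTail [:: PProj 1]).

Lemma eval_code_drop i c v : eval X PCodeDrop (i :: c :: v) (iter i code_tail c).
Proof.
elim: i => [|i IH]; first exact/ePrec0/eProj.
exact: ePrecS IH (eval_comp1 (eProj _ _ _) (eval_code_tail _ _)).
Qed.

Definition code_bit (i c : nat) : bool := odd (iter i code_tail c).-1.

Definition PBit : prog := PComp POdd [:: PComp PPred [:: PCodeDrop]].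

Lemma eval_bit i c v : eval X PBit (i :: c :: v) (code_bit i c).
Proof.
exact: eval_comp1 (eval_comp1 (eval_code_drop _ _ _) (eval_pred _ _)) (eval_odd _ _).
Qed.

Definition PLookup (F : seq nat) : prog :=
  PComp POr [:: PComp (PMem F) [:: PProj 0]; PBit].

Lemma eval_lookup F i c v :
  eval X (PLookup F) (i :: c :: v) ((i \in F) || code_bit i c).
Proof.
exact: eval_comp2 (eval_comp1 (eProj _ _ _) (eval_mem _ _ _)) (eval_bit _ _ _) (eval_or _ _ _).
Qed.

Definition tri (m : nat) : nat := (m * m.+1)./2.

Definition PTri : prog :=
  PComp PHalf [:: PComp PMul [:: PProj 0; PComp PSucc [:: PProj 0]]].

Lemma eval_tri m v : eval X PTri (m :: v) (tri m).
Proof.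
apply: eval_comp1 _ (eval_half _ _).
exact: eval_comp2 (eProj _ _ _) (eval_comp1 (eProj _ _ _) (eSucc _ _)) (eval_mul _ _ _).
Qed.

Definition PUnpairTest : prog :=
  PComp PSub [:: PComp PSucc [:: PProj 1]; PComp PTri [:: PComp PSucc [:: PProj 0]]].

Lemma eval_unpair_test w n v : eval X PUnpairTest (w :: n :: v) (n.+1 - tri w.+1).
Proof.
apply: eval_comp2 (eval_comp1 (eProj _ _ _) (eSucc _ _)) _ (eval_sub _ _ _).
exact: eval_comp1 (eval_comp1 (eProj _ _ _) (eSucc _ _)) (eval_tri _ _).
Qed.

Definition PUnpairSnd : prog := PComp PSub [:: PProj 1; PComp PTri [:: PProj 0]].

Lemma eval_unpair_snd w n v : eval X PUnpairSnd (w :: n :: v) (n - tri w).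
Proof.
exact: eval_comp2 (eProj _ _ _) (eval_comp1 (eProj _ _ _) (eval_tri _ _)) (eval_sub _ _ _).
Qed.

Definition PUnpairFst : prog := PComp PSub [:: PProj 0; PUnpairSnd].

Lemma eval_unpair_fst w n v : eval X PUnpairFst (w :: n :: v) (w - (n - tri w)).
Proof. exact: eval_comp2 (eProj _ _ _) (eval_unpair_snd _ _ _) (eval_sub _ _ _). Qed.

End Arithmetic.

Lemma code_tail_cons b s : code_tail (code_str (b :: s)) = code_str s.
Proof. by rewrite /code_tail /= addn1 addSn /= addnC half_bit_double. Qed.

Lemma code_bit_code s i : code_bit i (code_str s) = nth false s i.
Proof.
elim: s i => [|b s IH] [|i].
- by [].
- by rewrite /code_bit /= iter_fix.
- by rewrite /code_bit /= addn1 addSn /= oddD odd_double; case: b.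
- by rewrite [RHS]/= -IH /code_bit iterSr code_tail_cons.
Qed.

Lemma code_str_surj a : exists s, code_str s = a.
Proof.
elim/ltn_ind: a => [[|a] IH]; first by exists [::].
have [|s Hs] := IH a./2; first by rewrite ltn_half_double -addnn ltn_addr.
by exists (odd a :: s); rewrite /= Hs addn1 addSn addnC odd_double_half.
Qed.

Lemma tri_binomial m : tri m = 'C(m.+1, 2).
Proof. by rewrite bin2 mulnC. Qed.

Lemma triS m : tri m.+1 = tri m + m.+1.
Proof. by rewrite !tri_binomial binS bin1. Qed.

Lemma nat_div2E n : Nat.div n 2 = n./2.
Proof. by rewrite -divn2; have := Nat.div_mod n 2; have := Nat.mod_upper_bound n 2; lia. Qed.

Lemma cpairE a b : cpair a b = tri (a + b) + b.
Proof. by rewrite /cpair nat_div2E. Qed.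

Lemma leq_tri m m' : m <= m' -> tri m <= tri m'.
Proof. by move=> le_mm'; rewrite !tri_binomial leq_bin2l. Qed.

Lemma tri_interval n : exists w, tri w <= n < tri w.+1.
Proof.
elim: n => [|n [w /andP [lo hi]]]; first by exists 0.
case: (ltnP n.+1 (tri w.+1)) => [hi'|lo']; first by exists w; rewrite hi' ltnW.
by exists w.+1; rewrite lo' triS addnS ltnS ltn_addr.
Qed.

Lemma cpair_interval a b : tri (a + b) <= cpair a b < tri (a + b).+1.
Proof. by rewrite cpairE leq_addr triS ltn_add2l ltnS leq_addl. Qed.

Lemma cpair_surj n : exists a b, n = cpair a b.
Proof.
have [w /andP [lo hi]] := tri_interval n.
have le_bw : n - tri w <= w by rewrite leq_subLR -ltnS -addnS -triS.
by exists (w - (n - tri w)), (n - tri w); rewrite cpairE subnK // subnKC.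
Qed.

Definition PUnpairSum : prog := PMu PUnpairTest.

Lemma eval_unpair_sum X n w : tri w <= n < tri w.+1 -> eval X PUnpairSum [:: n] w.
Proof.
move=> /andP [lo hi]; apply: eMu.
  by apply: eval_eq (eval_unpair_test _ _ _ _) _; apply/eqP; rewrite subn_eq0.
move=> m lt_mw; exists (n - tri m.+1); apply: eval_eq (eval_unpair_test _ _ _ _) _.
by rewrite subSn // (leq_trans (leq_tri lt_mw) lo).
Qed.

Definition PUnpair (f : prog) : prog :=
  PComp (PComp f [:: PUnpairSnd; PUnpairFst]) [:: PUnpairSum; PProj 0].

Lemma eval_unpair X f a b y : eval X (PUnpair f) [:: cpair a b] y <-> eval X f [:: b; a] y.
Proof.
have Hw := eval_unpair_sum X (cpair_interval a b).
have Eb : cpair a b - tri (a + b) = b by rewrite cpairE addKn.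
have Ea : a + b - b = a by rewrite addnK.
split.
  move=> /eval_comp2_inv [w [n [Hw' /eval_proj_inv -> /eval_comp2_inv [b' [a' [Hb Ha]]]]]].
  rewrite -(eval_det Hw Hw') in Hb Ha.
  rewrite -(eval_det (eval_unpair_snd _ _ _ _) Hb) -(eval_det (eval_unpair_fst _ _ _ _) Ha).
  by rewrite /= Eb Ea.
move=> H; apply: eval_comp2 Hw (eProj _ _ _) _.
by apply: eval_comp2 (eval_unpair_snd _ _ _ _) (eval_unpair_fst _ _ _ _) _; rewrite /= Eb Ea.
Qed.

(** * The operator of a stem and a program *)

Definition PDiverge : prog := PMu POne.

Lemma eval_diverge X v y : ~ eval X PDiverge v y.
Proof. by move=> /eval_mu_inv [H _]; have := eval_det H (eval_one X _). Qed.

(* Queries are answered by [L] on the query and the extra last argument, at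
   position [k]; where [p] has no derivation at arity [k] the result diverges,
   and at arity 0 [PSucc] must not read the extra argument as its input. *)
Fixpoint inline_oracle (L p : prog) (k : nat) : prog :=
  match p with
  | PZero => PZero
  | PSucc => if k is 0 then POne else PSucc
  | PProj i => if i < k then PProj i else PZero
  | POracle => if k is 0 then PDiverge else PComp L [:: PProj 0; PProj k]
  | PComp f gs =>
      PComp (inline_oracle L f (size gs)) (map (inline_oracle L ^~ k) gs ++ [:: PProj k])
  | PPrec f g => if k is k'.+1 then PPrec (inline_oracle L f k') (inline_oracle L g k'.+2)
                 else PDiverge
  | PMu f => PMu (inline_oracle L f k.+1)
  end.

Lemma evals_size X gs v ws : evals X gs v ws -> size ws = size gs.
Proof.
elim: gs ws => [|g gs IH] ws; first by move=> /evals_nil_inv ->.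
by move=> /evals_cons_inv [w [ws' [-> [_ /IH /= ->]]]].
Qed.

Section InlineOracle.

Variables (X : nset) (chi : nat -> bool) (L : prog) (c : nat).
Hypothesis chiP : forall i, X i <-> chi i.
Hypothesis L_chi : forall i, eval empty_set L [:: i; c] (chi i).

Lemma nth_size_cat v : nth 0 (v ++ [:: c]) (size v) = c.
Proof. by rewrite nth_cat ltnn subnn. Qed.

Lemma eval_oracle_chi x v y : eval X POracle (x :: v) y <-> y = chi x.
Proof.
split; first by case/eval_oracle_inv=> [] [/chiP]; case: (chi x) => // _ ->.
move=> ->; case chi_x: (chi x); last by apply/eOracleOut => /chiP; rewrite chi_x.
by apply/eOracleIn/chiP; rewrite chi_x.
Qed.

Lemma inline_oracle_sound p v y :
  eval X p v y -> eval empty_set (inline_oracle L p (size v)) (v ++ [:: c]) y.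
Proof.
elim/prog_nested_ind: p v y.
- by move=> v y /eval_zero_inv ->; apply: eZero.
- by move=> [|x v] y /eval_succ_inv -> /=; [apply: eval_one|apply: eSucc].
- move=> i v y /eval_proj_inv -> /=; case: ifP => lt_iv.
    by apply: eval_eq (eProj _ _ _) _; rewrite nth_cat lt_iv.
  by apply: eval_eq (eZero _ _) _; rewrite nth_default // leqNgt lt_iv.
- move=> [|x v] y; first by move=> /eval_oracle_nil.
  move=> /eval_oracle_chi -> /=; apply: eval_comp2 (eProj _ _ _) (eProj _ _ _) _.
  by rewrite [nth _ _ (size v).+1](nth_size_cat (x :: v)).
- move=> f gs IHf IHgs v y /eval_comp_inv [ws [Hs Hf]] /=.
  rewrite -(evals_size Hs); apply: eComp (IHf _ _ Hf); clear Hf.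
  elim: gs ws IHgs Hs => [|g gs IH] ws IHgs.
    move=> /evals_nil_inv -> /=.
    exact: esCons (eval_eq (eProj _ _ _) (nth_size_cat v)) (esNil _ _).
  move=> /evals_cons_inv [w [ws' [-> [Hg Hs]]]].
  apply: esCons (IHgs g (or_introl erefl) _ _ Hg) _.
  exact: IH (fun g' g'gs => IHgs g' (or_intror g'gs)) Hs.
- move=> f g IHf IHg [|n v] y; first by move=> /eval_prec_nil.
  elim: n y => [|n IHn] y /=.
    by move=> /eval_prec0_inv /IHf; apply: ePrec0.
  by move=> /eval_precS_inv [z [/IHn Hp /IHg]]; apply: ePrecS Hp.
- move=> f IHf v n /eval_mu_inv [H0 Hlt] /=; apply: eMu; first exact: (IHf (n :: v)).
  by move=> m /Hlt [k Hk]; exists k; apply: (IHf (m :: v)).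
Qed.

Lemma inline_oracle_complete p v y :
  eval empty_set (inline_oracle L p (size v)) (v ++ [:: c]) y -> eval X p v y.
Proof.
elim/prog_nested_ind: p v y.
- by move=> v y /eval_zero_inv ->; apply: eZero.
- move=> [|x v] y /=; last by move=> /eval_succ_inv ->; apply: eSucc.
  by move=> H; rewrite (eval_det H (eval_one _ _)); apply: eSucc.
- move=> i v y /=; case: ifP => lt_iv.
    by move=> /eval_proj_inv ->; rewrite nth_cat lt_iv; apply: eProj.
  move=> /eval_zero_inv ->; apply: eval_eq (eProj _ _ _) _.
  by rewrite nth_default // leqNgt lt_iv.
- move=> [|x v] y /=; first by move=> /eval_diverge.
  move=> /eval_comp2_inv [i [a [/eval_proj_inv -> /eval_proj_inv ->]]].
  rewrite [nth _ _ (size v).+1](nth_size_cat (x :: v)) /= => /(eval_det (L_chi x)) <-.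
  exact/eval_oracle_chi.
- move=> f gs IHf IHgs v y /eval_comp_inv [ws' [Hs Hf]].
  have [ws [Ews' Hws]] : exists ws, ws' = ws ++ [:: c] /\ evals X gs v ws.
    elim: gs ws' IHgs Hs {Hf} => [|g gs IH] ws' IHgs.
      move=> /evals_cons_inv [w [ws1 [-> [/eval_proj_inv -> /evals_nil_inv ->]]]].
      by exists [::]; rewrite nth_size_cat; split=> //; apply: esNil.
    move=> /evals_cons_inv [w [ws1 [-> [Hg Hs]]]].
    have [ws [-> Hws]] := IH ws1 (fun g' g'gs => IHgs g' (or_intror g'gs)) Hs.
    exists (w :: ws); split=> //.
    exact: esCons (IHgs g (or_introl erefl) _ _ Hg) Hws.
  have size_ws := evals_size Hws.
  by apply: eComp Hws (IHf _ _ _); rewrite size_ws -Ews'.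
- move=> f g IHf IHg [|n v] y /=; first by move=> /eval_diverge.
  elim: n y => [|n IHn] y.
    by move=> /eval_prec0_inv /IHf; apply: ePrec0.
  by move=> /eval_precS_inv [z [/IHn Hp /(IHg (n :: z :: v))]]; apply: ePrecS.
- move=> f IHf v n /eval_mu_inv [H0 Hlt] /=; apply: eMu; first exact: (IHf (n :: v)).
  by move=> m /Hlt [k Hk]; exists k; apply: (IHf (m :: v)).
Qed.

Lemma eval_inline_oracle p v y :
  eval empty_set (inline_oracle L p (size v)) (v ++ [:: c]) y <-> eval X p v y.
Proof. by split; [apply: inline_oracle_complete|apply: inline_oracle_sound]. Qed.

End InlineOracle.

Definition string_set (s : seq bool) : nset := fun i => nth false s i.

Definition halts (e : prog) (X : nset) (x : nat) : Prop := exists y, eval X e [:: x] y.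

Lemma halts_use e X x : halts e X x -> finite_use X (fun Y => halts e Y x).
Proof. by move=> [y /eval_use]; apply: finite_use_impl => Y Hy; exists y. Qed.

Lemma halts_ext e X Y x : (forall i, X i <-> Y i) -> halts e X x -> halts e Y x.
Proof. by move=> XY /halts_use [u Hu]; apply: Hu => i _. Qed.

Definition theta (F : seq nat) (e : prog) : operator :=
  fun sx => halts e (seq_union F (string_set sx.1)) sx.2.

Definition PTheta (F : seq nat) (e : prog) : prog :=
  PUnpair (inline_oracle (PLookup F) e 1).

Lemma eval_theta F e s x y :
  eval empty_set (PTheta F e) [:: cpair (code_str s) x] y <->
  eval (seq_union F (string_set s)) e [:: x] y.
Proof.
rewrite eval_unpair; apply: (eval_inline_oracle
  (chi := fun i => (i \in F) || code_bit i (code_str s)) _ _ e [:: x]) => i.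
  rewrite code_bit_code /seq_union /string_set.
  by split=> [[]|/orP []] ->; rewrite ?orbT; auto.
exact: eval_lookup.
Qed.

Lemma theta_rel_ce F e : rel_ce_operator (theta F e).
Proof.
exists (PTheta F e) => n; split.
  by move=> [s [x [-> [y /eval_theta Hy]]]]; exists y.
move=> [y]; have [a [x ->]] := cpair_surj n; have [s <-] := code_str_surj a.
by move=> /eval_theta Hy; exists s, x; split=> //; exists y.
Qed.

Definition uniform_on (C : nset) (F : seq nat) (e : prog) (A : nset) : Prop :=
  forall_infsub C (fun S => forall x, A x <-> halts e (seq_union F S) x).

Lemma agree_below_union n F X Y :
  agree_below n X Y -> agree_below n (seq_union F X) (seq_union F Y).
Proof. by move=> XY i /XY; rewrite /seq_union; tauto. Qed.

Lemma apply_theta C F e A : infinite C -> uniform_on C F e A ->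
  forall_infsub C (fun S => forall x, apply_op (theta F e) S x <-> A x).
Proof.
move=> Cinf unif S SC Sinf x; split.
  move=> [s [s_S /halts_use [u Hu]]].
  pose S' i := i < size s /\ S i \/ above_set (maxn u (size s)) C i.
  have S'C : subset S' C by move=> i [[_ /SC]|[]].
  have S'inf : infinite S'.
    move=> n; have [m [le_nm Cm]] := infinite_above_set (maxn u (size s)) Cinf n.
    by exists m; split=> //; right.
  apply/(unif S' S'C S'inf)/Hu/agree_below_union => i lt_iu.
  rewrite /string_set /S' /above_set geq_max [u <= i]leqNgt lt_iu /=.
  case: (ltnP i (size s)) => [lt_is|le_si].
    by rewrite -(s_S i lt_is); split=> [->|[[_ ->]|[]]]; auto.
  by rewrite nth_default //; split=> //; case=> [[]|[]].
move=> /(unif S SC Sinf x) /halts_use [u Hu].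
exists (mkseq (fun i => decide (S i)) u); split.
  by move=> i; rewrite size_mkseq => lt_iu; rewrite nth_mkseq //; split=> /decideP.
apply/Hu/agree_below_union => i lt_iu.
by rewrite /string_set nth_mkseq //; split=> /decideP.
Qed.

(** * Mathias forcing *)

Definition condition (B : nset) (F : seq nat) (X : nset) : Prop :=
  all_in F B /\ subset X B /\ infinite X.

Definition extends (F : seq nat) (X : nset) (F' : seq nat) (X' : nset) : Prop :=
  {subset F <= F'} /\ all_in F' (seq_union F X) /\ subset X' X.

Definition forces (A : nset) (e : prog) (F : seq nat) (X : nset) : Prop :=
  forall S, all_in F S -> subset S (seq_union F X) -> infinite S ->
    ~ (forall x, A x <-> halts e S x).

Lemma extends_refl F X : extends F X F X.
Proof. by split=> //; split=> // i; left. Qed.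

Lemma extends_trans F1 X1 F2 X2 F3 X3 :
  extends F1 X1 F2 X2 -> extends F2 X2 F3 X3 -> extends F1 X1 F3 X3.
Proof.
move=> [F12 [F2X1 X21]] [F23 [F3X2 X32]]; split; first by move=> i /F12 /F23.
split; last exact: subset_trans X32 X21.
by move=> i /F3X2 [/F2X1 //|/X21]; right.
Qed.

Lemma forces_extends A e F X F' X' :
  forces A e F X -> extends F X F' X' -> forces A e F' X'.
Proof.
move=> HF [FF' [F'X X'X]] S F'S SF'X'; apply: HF; first by move=> i /FF' /F'S.
by move=> i /SF'X' [/F'X //|/X'X]; right.
Qed.

Section Forcing.

Variables (A B : nset) (e : prog) (F : seq nat) (X : nset).
Hypothesis FX : condition B F X.

Definition forcing_extension : Prop :=
  exists F' X', condition B F' X' /\ extends F X F' X' /\ forces A e F' X'.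

Lemma force_false_positive S x :
  subset S X -> ~ A x -> halts e (seq_union F S) x -> forcing_extension.
Proof.
case: FX => [FB [XB Xinf]] SX NAx /halts_use [u Hu].
pose G := [seq i <- iota 0 u | decide (S i)].
have memG i : i \in G <-> S i /\ i < u.
  by rewrite mem_filter mem_iota; split=> [/andP [/decideP]|[/decideP -> ->]].
exists (F ++ G), (above_set u X); split; last split.
- split; last by split; [move=> i [/XB]|apply: infinite_above_set].
  by move=> i; rewrite mem_cat => /orP [/FB //|/memG [/SX /XB]].
- split; first by move=> i iF; rewrite mem_cat iF.
  split; last by move=> i [].
  by move=> i; rewrite mem_cat => /orP [iF|/memG [/SX]]; [left|right].
move=> S' FGS' S'FGX _ HS'; apply/NAx/HS'/Hu => i lt_iu; split.
  case=> [iF|Si]; apply: FGS'; rewrite mem_cat ?iF //.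
  by apply/orP; right; apply/memG.
case/S'FGX=> [|[_]]; last by rewrite leqNgt lt_iu.
by rewrite mem_cat => /orP [iF|/memG []]; [left|right].
Qed.

Lemma force_missing_positive Y P x :
  subset Y X -> infinite Y -> all_in P X -> A x ->
  forall_infsub Y (fun Z => ~ halts e (seq_union (F ++ P) Z) x) -> forcing_extension.
Proof.
case: FX => [FB [XB Xinf]] YX Yinf PX Ax noHalt.
exists (F ++ P), Y; split; last split.
- split; last by split=> //; apply: subset_trans YX XB.
  by move=> i; rewrite mem_cat => /orP [/FB //|/PX /XB].
- split; first by move=> i iF; rewrite mem_cat iF.
  by split=> // i; rewrite mem_cat => /orP [iF|/PX]; [left|right].
move=> S FPS SFPY Sinf HS.
have Zinf : infinite (fun i => S i /\ Y i) by apply: infinite_cofinite Sinf SFPY.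
apply: (noHalt _ (fun i => @proj2 _ _) Zinf); apply: halts_ext (proj1 (HS x) Ax) => i.
by rewrite /seq_union; split=> [Si|[/FPS|[]]] //; case: (SFPY i Si); auto.
Qed.

Definition halts_with (P : seq nat) (x : nat) (Z : nset) : Prop :=
  halts e (seq_union (F ++ P) Z) x.

Lemma halts_with_open P x S :
  halts_with P x S -> exists n, forall T, agree_below n S T -> halts_with P x T.
Proof. by move=> /halts_use [u Hu]; exists u => T /agree_below_union /Hu. Qed.

Lemma homogeneous_halts_with_eq_mem P P' x Y :
  P =i P' -> homogeneous (halts_with P x) Y -> homogeneous (halts_with P' x) Y.
Proof.
have E Q Q' Z : Q =i Q' -> halts_with Q x Z -> halts_with Q' x Z.
  by move=> QQ'; apply: halts_ext => i; rewrite /seq_union !mem_cat QQ'.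
move=> PP' [H|H]; [left|right] => Z ZY Zinf; first exact: E PP' (H Z ZY Zinf).
by apply: contra_not (H Z ZY Zinf); apply: E.
Qed.

Lemma exists_homogeneous_tails : exists c, increasing c /\ (forall j, X (c j)) /\
  forall k x (P : seq nat), x < k -> {subset P <= mkseq c k} ->
    homogeneous (halts_with P x) (tail_set c k).
Proof.
pose R (p : seq nat) Y := forall x (P : seq nat), x < size p -> {subset P <= p} ->
  homogeneous (halts_with P x) Y.
have [||c [c_incr [cX Rc]]] := @fusion R _ _ X FX.2.2.
- by move=> p Y Y' Y'Y RY x P lt_xp Pp; apply: homogeneous_hereditary Y'Y (RY x P lt_xp Pp).
- move=> p Y Yinf.
  pose L := [seq (x, P) | x <- iota 0 (size p), P <- subseqs p].
  have [|Y' [Y'Y [Y'inf HY']]] := @dense_all _ L (fun q => homogeneous (halts_with q.2 q.1))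
    (fun q => @homogeneous_hereditary _) _ Y Yinf.
    by move=> q Z Zinf; apply: open_ramsey Zinf => S; apply: halts_with_open.
  exists Y'; split=> //; split=> // x P lt_xp /subseqs_complete [Q pQ PQ].
  apply: homogeneous_halts_with_eq_mem (HY' (x, Q) _) => [i|]; first by rewrite PQ.
  by apply: allpairs_f; rewrite ?mem_iota.
exists c; split=> //; split=> // k x P lt_xk Pc.
by apply: Rc; rewrite ?size_mkseq.
Qed.

Lemma force_or_uniform :
  forcing_extension \/ exists C, subset C X /\ infinite C /\ uniform_on C F e A.
Proof.
have [c [c_incr [cX Hc]]] := exists_homogeneous_tails.
have CX : subset (tail_set c 0) X by move=> _ [j _ ->].
have [[S [x [SC [NAx HS]]]]|noFalse] :=
  classic (exists S x, subset S (tail_set c 0) /\ ~ A x /\ halts e (seq_union F S) x).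
  by left; apply: force_false_positive (subset_trans SC CX) NAx HS.
have [[k [x [P [lt_xk [Pc [Ax noHalt]]]]]]|noMissing] := classic (exists k x (P : seq nat),
    x < k /\ {subset P <= mkseq c k} /\ A x /\
    forall_infsub (tail_set c k) (fun Z => ~ halts_with P x Z)).
  left; apply: force_missing_positive Ax noHalt.
  - by move=> _ [j _ ->].
  - exact: infinite_tail_set.
  - by move=> i /Pc /mem_mkseq_incr [j _ ->].
right; exists (tail_set c 0); split=> //; split; first exact: infinite_tail_set.
move=> S SC Sinf x; split=> [Ax|HS]; last first.
  by apply: NNPP => NAx; apply: noFalse; exists S, x.
pose P := [seq i <- mkseq c x.+1 | decide (S i)].
have Pc : {subset P <= mkseq c x.+1} by move=> i; rewrite mem_filter => /andP [].
have Zinf : infinite (fun i => S i /\ tail_set c x.+1 i).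
  by apply: (infinite_cofinite (L := mkseq c x.+1) Sinf) => i /SC /(tail_set_split x.+1).
case: (Hc x.+1 x P (ltnSn x) Pc) => [pos|neg]; last first.
  by case: noMissing; exists x.+1, x, P.
apply: halts_ext (pos _ (fun i => @proj2 _ _) Zinf) => i.
rewrite /seq_union mem_cat mem_filter; split.
  by case=> [/orP [iF|/andP [/decideP Si _]]|[Si _]]; [left|right|right].
case=> [iF|Si]; first by rewrite iF; left.
case: (tail_set_split x.+1 (SC i Si)) => [ic|itail]; last by right.
by left; apply/orP; right; rewrite ic andbT; apply/decideP.
Qed.

End Forcing.

Fixpoint prog_tree (p : prog) : GenTree.tree nat :=
  match p with
  | PZero => GenTree.Node 0 [::]
  | PSucc => GenTree.Node 1 [::]
  | PProj i => GenTree.Node 2 [:: GenTree.Leaf i]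
  | POracle => GenTree.Node 3 [::]
  | PComp f gs => GenTree.Node 4 (prog_tree f :: map prog_tree gs)
  | PPrec f g => GenTree.Node 5 [:: prog_tree f; prog_tree g]
  | PMu f => GenTree.Node 6 [:: prog_tree f]
  end.

Fixpoint tree_prog (t : GenTree.tree nat) : option prog :=
  match t with
  | GenTree.Node 0 [::] => Some PZero
  | GenTree.Node 1 [::] => Some PSucc
  | GenTree.Node 2 [:: GenTree.Leaf i] => Some (PProj i)
  | GenTree.Node 3 [::] => Some POracle
  | GenTree.Node 4 (tf :: tgs) => omap (PComp^~ (pmap tree_prog tgs)) (tree_prog tf)
  | GenTree.Node 5 [:: tf; tg] =>
      obind (fun f => omap (PPrec f) (tree_prog tg)) (tree_prog tf)
  | GenTree.Node 6 [:: tf] => omap PMu (tree_prog tf)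
  | _ => None
  end.

Lemma prog_treeK : pcancel prog_tree tree_prog.
Proof.
elim/prog_nested_ind => //= [f gs -> IHgs|f g -> ->|f ->] //=.
by congr (Some (PComp f _)); elim: gs IHgs => //= g gs IH IHgs; rewrite IHgs ?IH //; auto.
Qed.

HB.instance Definition _ := PCanIsCountable prog_treeK.

Section Generic.

Variables A B : nset.
Hypothesis Binf : infinite B.
Hypothesis force_dense : forall F X e, condition B F X -> forcing_extension A B e F X.

Lemma extend_by_large F X k : condition B F X ->
  exists m, k <= m /\ condition B (m :: F) X /\ extends F X (m :: F) X.
Proof.
move=> [FB [XB Xinf]]; have [m [le_km Xm]] := Xinf k; exists m; split=> //; split.
  by split=> // i; rewrite in_cons => /predU1P [->|/FB]; [apply: XB|].
split; first by move=> i iF; rewrite in_cons iF orbT.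
by split=> // i; rewrite in_cons => /predU1P [->|iF]; [right|left].
Qed.

Lemma generic_not_ce : exists S, subset S B /\ infinite S /\ ~ ce_in S A.
Proof.
pose I (q : seq nat * nset) := condition B q.1 q.2.
pose step k (q q' : seq nat * nset) := [/\ extends q.1 q.2 q'.1 q'.2,
  forces A (odflt PZero (unpickle k)) q'.1 q'.2 & exists2 m, k <= m & m \in q'.1].
have step_ex k q : I q -> exists q', I q' /\ step k q q'.
  move=> /(force_dense (odflt PZero (unpickle k))) [F1 [X1 [FX1 [ext1 force1]]]].
  have [m [le_km [FX2 ext2]]] := extend_by_large k FX1.
  exists (m :: F1, X1); split=> //; split; first exact: extends_trans ext1 ext2.
    exact: forces_extends force1 ext2.
  by exists m; rewrite ?mem_head.
have I0 : I ([::], B) by split=> //; split.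
have [f [f0 Hf]] := dependent_choice I0 step_ex.
have f_ext j d : extends (f j).1 (f j).2 (f (j + d)).1 (f (j + d)).2.
  elim: d => [|d IH]; first by rewrite addn0; apply: extends_refl.
  by rewrite addnS; apply: extends_trans IH _; case: (Hf (j + d)).2.
pose S i := exists k, i \in (f k).1.
have Sinf : infinite S.
  by move=> n; case: (Hf n).2 => _ _ [m le_nm mf]; exists m; split=> //; exists n.+1.
exists S; split; first by move=> i [k /(Hf k).1.1].
split=> // [[e He]]; pose k := pickle e.
have [_ force_e _] := (Hf k).2; rewrite /= pickleK /= in force_e.
apply: force_e He => // [i ik|i [m im]]; first by exists k.+1.
case: (leqP m k.+1) => [le_mk|/ltnW le_km].
  by left; have [+ _] := f_ext m (k.+1 - m); rewrite subnKC //; apply.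
by have [_ [+ _]] := f_ext k.+1 (m - k.+1); rewrite subnKC //; apply.
Qed.

End Generic.

Theorem proposition3p7 (A B : nset) :
  infinite B ->
  (forall S : nset, subset S B -> infinite S -> ce_in S A) ->
  exists (C : nset) (Theta : operator),
    subset C B /\ infinite C /\ rel_ce_operator Theta /\
    (forall S : nset, subset S C -> infinite S ->
       forall x, apply_op Theta S x <-> A x).
Proof.
move=> Binf ceA; apply: NNPP => noOp.
have force_dense F X e : condition B F X -> forcing_extension A B e F X.
  move=> FX; case: (force_or_uniform A e FX) => // [[C [CX [Cinf unif]]]].
  case: noOp; exists C, (theta F e); split; first exact: subset_trans CX FX.2.1.
  by split=> //; split; [apply: theta_rel_ce|apply: apply_theta].
have [S [SB [Sinf notce]]] := generic_not_ce Binf force_dense.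
exact: notce (ceA S SB Sinf).
Qed.
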